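(* Let $M=(E,\mathcal{I})$ be a matroid and let $x\in\mathbb{R}^E$ with $x>0$ lie in the base polytope $B(M)$. Then there is a loss matrix $L$ (namely the diagonal matrix with $L_{e,e}=1/x_e$ for $e\in E$) such that $(x,x)$ is a symmetric Nash equilibrium of the matroid game with loss matrix $L$.
   Context: $B(M)=\{x\ge0: x(S)\le r(S)\ \forall S\subseteq E,\ x(E)=r(E)\}$ with $r$ the rank function. In the matroid game with loss matrix $L$, the row player chooses $x\in B(M)$ minimizing $x^TLy$ and the column player chooses $y\in B(M)$ maximizing it; $(x,x)$ is a symmetric Nash equilibrium if $x^TLz\le x^TLx\le z^TLx$ for all $z\in B(M)$. *)

From mathcomp Require Import all_boot all_order all_algebra.
Set Implicit Arguments. Unset Strict Implicit. Unset Printing Implicit Defensive.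
Import Order.TTheory GRing.Theory Num.Theory.
Local Open Scope ring_scope.

Definition is_matroid (E : finType) (indep : {set E} -> bool) : Prop :=
  [/\ indep set0,
      (forall A B : {set E}, A \subset B -> indep B -> indep A) &
      (forall A B : {set E}, indep A -> indep B -> (#|A| < #|B|)%N ->
         exists2 e, e \in B :\: A & indep (e |: A))].

Definition mrank (E : finType) (indep : {set E} -> bool) (S : {set E}) : nat :=
  \max_(I : {set E} | indep I && (I \subset S)) #|I|.

Definition in_base_polytope (R : realFieldType) (E : finType)
    (indep : {set E} -> bool) (x : E -> R) : Prop :=
  [/\ (forall e, 0 <= x e),
      (forall S : {set E}, \sum_(e in S) x e <= (mrank indep S)%:R) &
      \sum_(e : E) x e = (mrank indep [set: E])%:R].

Definition bilin (R : realFieldType) (E : finType) (x : E -> R)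
    (L : E -> E -> R) (y : E -> R) : R :=
  \sum_(e : E) \sum_(f : E) x e * L e f * y f.

Definition symmetric_NE (R : realFieldType) (E : finType)
    (indep : {set E} -> bool) (L : E -> E -> R) (x : E -> R) : Prop :=
  in_base_polytope indep x /\
  forall z : E -> R, in_base_polytope indep z ->
    bilin x L z <= bilin x L x /\ bilin x L x <= bilin z L x.

From mathcomp Require Import all_boot all_order all_algebra.
Import Order.TTheory GRing.Theory Num.Theory.
Local Open Scope ring_scope.

(* With L = diag(1/x), both x^T L z and z^T L x equal the total mass of z, which
   is r(E) for every z in B(M).  All payoffs against x therefore coincide, and
   both equilibrium inequalities hold with equality. *)

Definition diag_loss {R : pzRingType} {E : finType} (d : E -> R) : E -> E -> R :=
  fun e f => if e == f then d e else 0.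

Lemma bilin_diag {R : realFieldType} {E : finType} (x d y : E -> R) :
  bilin x (diag_loss d) y = \sum_e x e * d e * y e.
Proof.
apply: eq_bigr => e _; rewrite (bigD1 e) //= /diag_loss eqxx big1 ?addr0 //.
by move=> f; rewrite eq_sym => /negbTE ->; rewrite mulr0 mul0r.
Qed.

Lemma bilin_diag_invl {R : realFieldType} {E : finType} (x y : E -> R) :
  (forall e, 0 < x e) -> bilin x (diag_loss (fun e => (x e)^-1)) y = \sum_e y e.
Proof.
move=> x_gt0; rewrite bilin_diag; apply: eq_bigr => e _.
by rewrite mulfV ?mul1r // gt_eqF.
Qed.

Lemma bilin_diag_invr {R : realFieldType} {E : finType} (x y : E -> R) :
  (forall e, 0 < x e) -> bilin y (diag_loss (fun e => (x e)^-1)) x = \sum_e y e.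
Proof.
move=> x_gt0; rewrite bilin_diag; apply: eq_bigr => e _.
by rewrite -mulrA mulVf ?mulr1 // gt_eqF.
Qed.

Lemma base_polytope_sum_eq {R : realFieldType} {E : finType}
    {indep : {set E} -> bool} {x z : E -> R} :
  in_base_polytope indep x -> in_base_polytope indep z ->
  \sum_e z e = \sum_e x e.
Proof. by case=> _ _ ->; case=> _ _ ->. Qed.

Theorem corollary11 (R : realFieldType) (E : finType) (indep : {set E} -> bool)
    (x : E -> R) :
  is_matroid indep ->
  in_base_polytope indep x ->
  (forall e, 0 < x e) ->
  symmetric_NE indep (fun e f => if e == f then (x e)^-1 else 0) x.
Proof.
move=> _ xB x_gt0; split=> // z zB.
rewrite !bilin_diag_invl ?bilin_diag_invr //.
by rewrite (base_polytope_sum_eq xB zB) lexx.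
Qed.
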